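(* Let $n\ge q\ge1$ and write $n=(2^q-1)v+w$ with $v=\lfloor n/(2^q-1)\rfloor$ and $w\in\{0,1,\dots,2^q-2\}$. For any blocked $2^n$ factorial in blocks of size $2^q$ whose generator matrix $X$ has all columns in $\mathcal{X}_q$ (so that all main effects are estimable), the number of estimable two-factor interactions is at most $$\phi_{\max}=\binom{n}{2}-vw-(2^q-1)\binom{v}{2}.$$
   Context: A blocked $2^n$ factorial in blocks of size $2^q$ is specified by a $q\times n$ generator matrix $X$ over $\mathrm{GF}(2)$ of rank $q$: the principal block is the row space of $X$ and the other blocks are its cosets in $\mathrm{GF}(2)^n$. An effect of a set $S$ of factors, with contrast $(-1)^{\sum_{j\in S}x_j}$, is estimable iff its contrast sums to zero over every block; equivalently the two-factor interaction $F_jF_k$ is estimable iff columns $j$ and $k$ of $X$ differ. $\mathcal{X}_q$ is the set of the $2^q-1$ nonzero $q\times1$ vectors over $\mathrm{GF}(2)$. *)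

From HB Require Import structures.
From mathcomp Require Import all_boot all_order all_algebra.
Set Implicit Arguments. Unset Strict Implicit. Unset Printing Implicit Defensive.
Import GRing.Theory Num.Theory.

(* Treatment combinations of a 2^n factorial: row vectors x in GF(2)^n. *)

Definition contrast (n : nat) (S : {set 'I_n}) (x : 'rV['F_2]_n) : int :=
  (-1) ^+ (\sum_(j in S) (val (x ord0 j)))%N.

Definition block (q n : nat) (X : 'M['F_2]_(q, n)) (a : 'rV['F_2]_n)
  : {set 'rV['F_2]_n} :=
  [set x : 'rV['F_2]_n | ((x - a)%R <= X)%MS].

Definition estimable (q n : nat) (X : 'M['F_2]_(q, n)) (S : {set 'I_n}) : bool :=
  [forall a : 'rV['F_2]_n, (\sum_(x in block X a) contrast S x)%R == 0%R].

Definition num_estimable_2fi (q n : nat) (X : 'M['F_2]_(q, n)) : nat :=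
  #|[set S : {set 'I_n} | (#|S| == 2) && estimable X S]|.

From HB Require Import structures.
From mathcomp Require Import all_boot all_order all_algebra.
From mathcomp Require Import zify ring.
Import GRing.Theory Num.Theory.

(* Group the factors by the column they receive in the generator matrix X.
   If F_j and F_k share a column, the contrast of F_jF_k is identically 1 on
   the principal block (the row space of X), so F_jF_k is not estimable.
   Hence every estimable 2-subset of factors meets two different column
   classes, which gives  #estimable + sum_c C(n_c, 2) <= C(n, 2),  where n_c
   is the number of factors with column c.  Since no column is zero, the n_c
   are indexed by the m = 2^q - 1 nonzero vectors and sum to n; the tangent
   line estimate  v x <= C(x,2) + C(v+1,2)  (v = n div m) shows that
   sum_c C(n_c, 2) >= v w + m C(v, 2)  with  w = n mod m, the value for the
   balanced split into classes of sizes v and v + 1.  The file proves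
   the non-estimability lemma, the pair-counting lemma for an arbitrary map
   between finite types, and the balanced-split inequality, then combines
   them. *)

Local Open Scope ring_scope.

Lemma contrast_pair_principal {q n : nat} {X : 'M['F_2]_(q, n)} {j k : 'I_n} :
  j != k -> col j X = col k X ->
  forall x, x \in block X 0 -> contrast [set j; k] x = 1%R.
Proof.
move=> njk ejk x; rewrite inE subr0 => /submxP [D ->].
rewrite /contrast big_setU1 ?inE //= big_set1.
have -> : (D *m X) ord0 k = (D *m X) ord0 j.
  rewrite !mxE; apply: eq_bigr => i _.
  by have := congr1 (fun c : 'cV['F_2]_q => c i ord0) ejk; rewrite !mxE => ->.
by rewrite addnn -mul2n exprM sqrrN !expr1n.
Qed.

(* Consequently a two-factor interaction between factors with equal columns
   is not estimable: its contrast sums to #|principal block| > 0 there. *)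
Lemma equal_columns_not_estimable {q n : nat} {X : 'M['F_2]_(q, n)} {j k : 'I_n} :
  j != k -> col j X = col k X -> ~~ estimable X [set j; k].
Proof.
move=> njk ejk; apply/negP => /forallP /(_ 0%R) /eqP.
rewrite (eq_bigr _ (contrast_pair_principal njk ejk)) sumr_const.
apply/eqP; rewrite -mulr_natl mulr1 pnatr_eq0 -lt0n; apply/card_gt0P.
by exists 0%R; rewrite inE subr0 sub0mx.
Qed.

Local Close Scope ring_scope.

Definition fibre {T U : finType} (f : T -> U) (u : U) : {set T} :=
  [set x | f x == u].

Lemma sum_card_fibres (T U : finType) (f : T -> U) :
  \sum_u #|fibre f u| = #|T|.
Proof.
under eq_bigr => u _ do rewrite -sum1_card big_mkcond /=.
rewrite exchange_big /= -sum1_card; apply: eq_bigr => x _.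
rewrite (bigD1 (f x)) //= inE eqxx big1 // => u nux.
by rewrite inE eq_sym (negbTE nux).
Qed.

(* A family E of 2-subsets of T containing no pair inside a fibre of f is
   disjoint from the pairs inside the fibres, so together they number at
   most C(#|T|, 2). *)
Lemma pairs_across_fibres (T U : finType) (f : T -> U) (E : {set {set T}}) :
  (forall S, S \in E -> #|S| = 2) ->
  (forall x y, x != y -> f x = f y -> [set x; y] \notin E) ->
  #|E| + \sum_u 'C(#|fibre f u|, 2) <= 'C(#|T|, 2).
Proof.
move=> E2 Esplit.
have card_sum (A : {set {set T}}) : #|A| = \sum_S (S \in A : nat).
  by rewrite -sum1_card big_mkcond.
under eq_bigr => u _ do rewrite -cards_draws card_sum.
rewrite -card_draws !card_sum exchange_big -big_split /=.
apply: leq_sum => S _; rewrite !inE.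
have [/cards2P [x [y [nxy ->]]] | nS2] := boolP (#|S| == 2); last first.
  have SE : S \notin E by apply: contra nS2 => /E2 ->.
  by rewrite (negbTE SE) big1 // => u _; rewrite inE (negbTE nS2) andbF.
rewrite (bigD1 (f x)) //= big1 => [|u /negbTE nux]; last first.
  by rewrite inE subUset !sub1set !inE [f x == u]eq_sym nux.
rewrite inE subUset !sub1set !inE eqxx /= addn0 cards2 nxy andbT.
case: eqP => [fyx | _]; last by rewrite addn0 leq_b1.
by rewrite (negbTE (Esplit _ _ nxy (esym fyx))).
Qed.

Lemma bin2_double (x : nat) : 'C(x, 2) * 2 = x * x.-1.
Proof. by elim: x => [|[|x] IH] //; rewrite binS bin1 mulnDl IH; nia. Qed.

(* Tangent-line bound for the convex function x |-> C(x, 2) at the integer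
   point between v and v + 1:  v x <= C(x, 2) + C(v + 1, 2). *)
Lemma bin2_tangent (x v : nat) : v * x <= 'C(x, 2) + 'C(v.+1, 2).
Proof.
rewrite -(leq_pmul2r (isT : 0 < 2)) mulnDl !bin2_double /=.
have [x_le_v | v_lt_x] := leqP x v.
- have [d ->] : exists d, v = x + d by exists (v - x); lia.
  case: x x_le_v => [|x] /=; nia.
- have [d ->] : exists d, x = v.+1 + d by exists (x - v.+1); lia.
  simpl; nia.
Qed.

Lemma balanced_split (I : finType) (A : {pred I}) (a : I -> nat) (n : nat) :
  \sum_(i in A) a i = n ->
  n %/ #|A| * (n %% #|A|) + #|A| * 'C(n %/ #|A|, 2) <= \sum_(i in A) 'C(a i, 2).
Proof.
move=> sum_a; set m := #|A|; set v := n %/ m; set w := n %% m.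
have tangent : v * n <= \sum_(i in A) 'C(a i, 2) + m * 'C(v.+1, 2).
  rewrite -sum_a big_distrr /= -sum_nat_const -big_split /=.
  by apply: leq_sum => i _; apply: bin2_tangent.
have n_def : n = v * m + w by apply: divn_eq.
have binS_v : 'C(v.+1, 2) = 'C(v, 2) + v by rewrite binS bin1.
have sq_v : v * v = 'C(v, 2) * 2 + v by rewrite bin2_double; case: (v) => //= k; nia.
have sq_vm : v * v * m = m * 'C(v, 2) * 2 + m * v by rewrite sq_v; ring.
move: tangent; rewrite binS_v {1}n_def mulnDr mulnA sq_vm.
move: (\sum_(i in A) _) => s; lia.
Qed.

Lemma card_nonzero_columns (q : nat) :
  #|[pred c : 'cV['F_2]_q | c != 0%R]| = 2 ^ q - 1.
Proof. by rewrite cardC1 card_mx card_ord muln1 subn1. Qed.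

(* Main bound; it only uses that every column of X is nonzero. *)
Theorem theorem2 (q n : nat) (X : 'M['F_2]_(q, n)) :
  1 <= q -> q <= n ->
  \rank X = q ->
  (forall j : 'I_n, col j X != 0%R) ->
  num_estimable_2fi X <=
    'C(n, 2) - (n %/ (2 ^ q - 1)) * (n %% (2 ^ q - 1))
             - (2 ^ q - 1) * 'C(n %/ (2 ^ q - 1), 2).
Proof.
move=> _ _ _ nonzero_cols.
pose column (j : 'I_n) := col j X.
have zero_fibre : fibre column 0%R = set0.
  by apply/setP => j; rewrite !inE (negbTE (nonzero_cols j)).
have drop_zero_fibre (F : nat -> nat) : F 0 = 0 ->
    \sum_c F #|fibre column c| = \sum_(c | c != 0%R) F #|fibre column c|.
  by move=> F0; rewrite (bigD1 0%R) //= zero_fibre cards0 F0.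
have across : num_estimable_2fi X
    + \sum_(c | c != 0%R) 'C(#|fibre column c|, 2) <= 'C(n, 2).
  rewrite -(drop_zero_fibre (binomial^~ 2)) // -[n in 'C(n, 2)]card_ord.
  apply: pairs_across_fibres => [S | j k njk ejk]; rewrite inE.
  - by case/andP => /eqP.
  - by rewrite negb_and (equal_columns_not_estimable njk ejk) orbT.
have sizes : \sum_(c | c != 0%R) #|fibre column c| = n.
  by rewrite -(drop_zero_fibre id) // sum_card_fibres card_ord.
have balanced : n %/ (2 ^ q - 1) * (n %% (2 ^ q - 1))
    + (2 ^ q - 1) * 'C(n %/ (2 ^ q - 1), 2)
    <= \sum_(c | c != 0%R) 'C(#|fibre column c|, 2).
  by rewrite -card_nonzero_columns; apply: balanced_split.
lia.
Qed.
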